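(* Let $S$ be a semilattice and let $\psi:S\to\mathbb C$ satisfy $\operatorname{def}(\psi):=\sup_{x,y\in S}|\psi(x)\psi(y)-\psi(xy)|<1/5$. Let $S_1=\{e\in S:\ |\psi(e)-1|<7/25\}$ and let $\chi$ be the indicator function of $S_1$. Then $\chi:S\to\mathbb C$ is multiplicative (i.e. $\chi(xy)=\chi(x)\chi(y)$ for all $x,y\in S$) and $\sup_{e\in S}|\psi(e)-\chi(e)|\le\frac75\operatorname{def}(\psi)$.
   Context: A semilattice is a commutative semigroup in which every element is idempotent. *)

From Stdlib Require Import Reals.
Open Scope R_scope.

Definition Cpx := (R * R)%type.
Definition C0 : Cpx := (0, 0).
Definition C1 : Cpx := (1, 0).
Definition Cmul (z w : Cpx) : Cpx :=
  (fst z * fst w - snd z * snd w, fst z * snd w + snd z * fst w).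
Definition Csub (z w : Cpx) : Cpx := (fst z - fst w, snd z - snd w).
Definition Cnorm (z : Cpx) : R := sqrt (fst z * fst z + snd z * snd z).

Definition is_semilattice {S : Type} (op : S -> S -> S) : Prop :=
  (forall x y z, op x (op y z) = op (op x y) z) /\
  (forall x y, op x y = op y x) /\
  (forall x, op x x = x).

Definition defect_values {S : Type} (op : S -> S -> S) (psi : S -> Cpx) (r : R) : Prop :=
  exists x y, r = Cnorm (Csub (Cmul (psi x) (psi y)) (psi (op x y))).

Definition S1 {S : Type} (psi : S -> Cpx) (e : S) : Prop :=
  Cnorm (Csub (psi e) C1) < 7/25.

Definition chi {S : Type} (psi : S -> Cpx) (e : S) : Cpx :=
  if Rlt_dec (Cnorm (Csub (psi e) C1)) (7/25) then C1 else C0.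

From Pilot Require Import Defs.
From Stdlib Require Import Reals Lra Psatz.
(* Re-import so that [C0] and [C1] denote the complex constants of Defs. *)
Import Defs.
From Coquelicot Require Complex.
Open Scope R_scope.

(* Write r = 7/5 d (so r < 7/25) and N(x,y) = |psi x psi y - psi (xy)| <= d.
   1. Since ee = e in a semilattice, every z = psi e is an "almost idempotent":
      |z| |z - 1| = |z^2 - z| <= d < 1/5, while |z| + |z - 1| >= 1.  An elementary
      real inequality then shows: either |z - 1| < 7/25, and then |z - 1| <= r, or
      |z - 1| >= 7/25, and then |z| <= r.  Hence |psi e - chi e| <= r for every e,
      i.e. psi e is r-close to 1 when chi e = 1 and r-close to 0 when chi e = 0.
   2. Multiplicativity of chi: if chi x = chi y = 1 but chi (xy) = 0, then
      |psi x psi y| >= (1 - r)^2 while |psi (xy)| <= r, contradicting N(x,y) <= d;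
      if chi x = 0 or chi y = 0 but chi (xy) = 1, then |psi x psi y| <= r (1 + r)
      while |psi (xy)| >= 1 - r, again a contradiction.  All other cases agree. *)

Lemma Cnorm_Cmod (z : Cpx) : Cnorm z = Complex.Cmod z.
Proof. unfold Cnorm, Complex.Cmod. f_equal. simpl. ring. Qed.

Lemma Cnorm_ge0 (z : Cpx) : 0 <= Cnorm z.
Proof. rewrite Cnorm_Cmod. apply Complex.Cmod_ge_0. Qed.

Lemma Cnorm_mul (z w : Cpx) : Cnorm (Cmul z w) = Cnorm z * Cnorm w.
Proof. rewrite !Cnorm_Cmod. apply Complex.Cmod_mult. Qed.

Lemma Cnorm_sub_triangle (x y z : Cpx) :
  Cnorm (Csub x z) <= Cnorm (Csub x y) + Cnorm (Csub y z).
Proof.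
  rewrite !Cnorm_Cmod.
  replace (Csub x z) with (Complex.Cplus (Csub x y) (Csub y z)).
  - apply Complex.Cmod_triangle.
  - destruct x, y, z; unfold Csub, Complex.Cplus; simpl; f_equal; ring.
Qed.

Lemma Cnorm_sub_sym (x y : Cpx) : Cnorm (Csub x y) = Cnorm (Csub y x).
Proof. unfold Cnorm, Csub; simpl. f_equal. ring. Qed.

Lemma Cnorm_sub_C0 (z : Cpx) : Cnorm (Csub z C0) = Cnorm z.
Proof. unfold Cnorm, Csub; simpl. f_equal. ring. Qed.

Lemma Cnorm_C1 : Cnorm C1 = 1.
Proof. unfold Cnorm; simpl. replace (1 * 1 + 0 * 0) with 1 by ring. apply sqrt_1. Qed.

Lemma Cnorm_lower (z : Cpx) : 1 - Cnorm (Csub z C1) <= Cnorm z.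
Proof.
  pose proof (Cnorm_sub_triangle C1 z C0) as T.
  rewrite Cnorm_sub_C0, Cnorm_sub_C0, Cnorm_C1, Cnorm_sub_sym in T. lra.
Qed.

Lemma Cnorm_upper (z : Cpx) : Cnorm z <= 1 + Cnorm (Csub z C1).
Proof.
  pose proof (Cnorm_sub_triangle z C1 C0) as T.
  rewrite !Cnorm_sub_C0, Cnorm_C1 in T. lra.
Qed.

Lemma Cnorm_reverse (u v : Cpx) : Cnorm u <= Cnorm v + Cnorm (Csub v u).
Proof.
  pose proof (Cnorm_sub_triangle u v C0) as T.
  rewrite !Cnorm_sub_C0, Cnorm_sub_sym in T. lra.
Qed.

Lemma Csquare_sub (z : Cpx) : Csub (Cmul z z) z = Cmul z (Csub z C1).
Proof. destruct z; unfold Cmul, Csub, C1; simpl; f_equal; ring. Qed.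

(* A factor with a cofactor of size >= 18/25 is at most 25/18 <= 7/5 times the product. *)
Lemma small_factor (a b d : R) : 18/25 <= a -> 0 <= b -> a * b <= d -> b <= 7/5 * d.
Proof. intros Ha Hb Hab. nra. Qed.

(* If a + b >= 1 and ab < 1/5 then a and b cannot both be >= 7/25, because then
   ab >= 7/25 (a + b) - (7/25)^2 >= 126/625 > 1/5. *)
Lemma not_both_large (a b : R) :
  1 <= a + b -> a * b < 1/5 -> 7/25 <= b -> a < 7/25.
Proof.
  intros Hs Hab Hb. destruct (Rlt_or_le a (7/25)) as [H | H]; [exact H |].
  assert ((a - 7/25) * (b - 7/25) >= 0) by nra. nra.
Qed.

Lemma almost_idempotent (z : Cpx) (d : R) :
  Cnorm (Csub (Cmul z z) z) <= d -> d < 1/5 ->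
  (Cnorm (Csub z C1) < 7/25 -> Cnorm (Csub z C1) <= 7/5 * d) /\
  (7/25 <= Cnorm (Csub z C1) -> Cnorm z <= 7/5 * d).
Proof.
  rewrite Csquare_sub, Cnorm_mul. intros Hprod Hd.
  pose proof (Cnorm_ge0 z). pose proof (Cnorm_ge0 (Csub z C1)).
  pose proof (Cnorm_lower z).
  split; intro Hb.
  - apply (small_factor (Cnorm z)); [lra | assumption | assumption].
  - assert (Ha : Cnorm z < 7/25) by (apply (not_both_large _ (Cnorm (Csub z C1))); lra).
    rewrite Rmult_comm in Hprod.
    apply (small_factor (Cnorm (Csub z C1))); [lra | assumption | assumption].
Qed.

Section AlmostMultiplicative.
Variables (S : Type) (op : S -> S -> S) (psi : S -> Cpx) (d : R).
Hypothesis op_idem : forall x, op x x = x.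
Hypothesis defect_bound :
  forall x y, Cnorm (Csub (Cmul (psi x) (psi y)) (psi (op x y))) <= d.
Hypothesis small_defect : d < 1/5.

(* d bounds a modulus, so it is nonnegative (a point of S is needed to witness this). *)
Lemma defect_nonneg (x y : S) : 0 <= d.
Proof. eapply Rle_trans; [apply Cnorm_ge0 | apply (defect_bound x y)]. Qed.

Lemma chi_cases (e : S) :
  (chi psi e = C1 /\ Cnorm (Csub (psi e) C1) <= 7/5 * d) \/
  (chi psi e = C0 /\ Cnorm (psi e) <= 7/5 * d).
Proof.
  assert (Hidem : Cnorm (Csub (Cmul (psi e) (psi e)) (psi e)) <= d).
  { rewrite <- (op_idem e) at 3. apply defect_bound. }
  destruct (almost_idempotent (psi e) d Hidem small_defect) as [Hnear1 Hnear0].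
  unfold chi. destruct (Rlt_dec (Cnorm (Csub (psi e) C1)) (7/25)) as [H | H].
  - left. auto.
  - right. split; [reflexivity | apply Hnear0; lra].
Qed.

Lemma near_one_product (x y : S) :
  Cnorm (Csub (psi x) C1) <= 7/5 * d -> Cnorm (Csub (psi y) C1) <= 7/5 * d ->
  7/5 * d < Cnorm (psi (op x y)).
Proof.
  intros Hx Hy.
  pose proof (Cnorm_reverse (Cmul (psi x) (psi y)) (psi (op x y))) as T.
  rewrite Cnorm_mul, Cnorm_sub_sym in T.
  pose proof (defect_bound x y). pose proof (Cnorm_lower (psi x)).
  pose proof (Cnorm_lower (psi y)). pose proof (Cnorm_ge0 (Csub (psi x) C1)).
  assert (Cnorm (psi x) * Cnorm (psi y) >= (1 - 7/5 * d) * (1 - 7/5 * d)).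
  { apply Rle_ge, Rmult_le_compat; nra. }
  nra.
Qed.

(* Every value psi y is near 0 or near 1, hence of modulus at most 1 + r. *)
Lemma psi_bounded (y : S) : Cnorm (psi y) <= 1 + 7/5 * d.
Proof.
  pose proof (Cnorm_upper (psi y)). pose proof (Cnorm_ge0 (Csub (psi y) C1)).
  destruct (chi_cases y) as [[_ Hy] | [_ Hy]]; lra.
Qed.

(* If psi x or psi y is near 0, then |psi x psi y| <= r (1 + r), so psi (xy),
   being within d of psi x psi y, is not near 1. *)
Lemma near_zero_product (x y : S) :
  Cnorm (psi x) <= 7/5 * d \/ Cnorm (psi y) <= 7/5 * d ->
  7/5 * d < Cnorm (Csub (psi (op x y)) C1).
Proof.
  intros Hsmall.
  assert (Hxy : Cnorm (psi x) * Cnorm (psi y) <= 7/5 * d * (1 + 7/5 * d)).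
  { pose proof (psi_bounded x). pose proof (psi_bounded y).
    pose proof (Cnorm_ge0 (psi x)). pose proof (Cnorm_ge0 (psi y)).
    destruct Hsmall as [Hx | Hy].
    - apply Rmult_le_compat; lra.
    - rewrite Rmult_comm. apply Rmult_le_compat; lra. }
  pose proof (Cnorm_reverse (psi (op x y)) (Cmul (psi x) (psi y))) as T.
  rewrite Cnorm_mul in T.
  pose proof (defect_bound x y). pose proof (Cnorm_lower (psi (op x y))).
  pose proof (defect_nonneg x y).
  nra.
Qed.

Lemma chi_multiplicative (x y : S) :
  chi psi (op x y) = Cmul (chi psi x) (chi psi y).
Proof.
  destruct (chi_cases x) as [[Ex Nx] | [Ex Nx]];
  destruct (chi_cases y) as [[Ey Ny] | [Ey Ny]];
  destruct (chi_cases (op x y)) as [[Ez Nz] | [Ez Nz]];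
  rewrite Ex, Ey, Ez; try (unfold Cmul, C1, C0; simpl; f_equal; ring); exfalso.
  - pose proof (near_one_product x y Nx Ny). lra.
  - pose proof (near_zero_product x y (or_intror Ny)). lra.
  - pose proof (near_zero_product x y (or_introl Nx)). lra.
  - pose proof (near_zero_product x y (or_introl Nx)). lra.
Qed.

End AlmostMultiplicative.

Theorem propositionp (S : Type) (op : S -> S -> S) (psi : S -> Cpx) (d : R) :
  is_semilattice op ->
  is_lub (defect_values op psi) d ->
  d < 1/5 ->
  (forall x y, chi psi (op x y) = Cmul (chi psi x) (chi psi y)) /\
  (forall e, Cnorm (Csub (psi e) (chi psi e)) <= 7/5 * d).
Proof.
  intros [_ [_ Hidem]] [Hub _] Hd.
  assert (Hdef : forall x y, Cnorm (Csub (Cmul (psi x) (psi y)) (psi (op x y))) <= d).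
  { intros x y. apply Hub. exists x, y. reflexivity. }
  split.
  - exact (chi_multiplicative S op psi d Hidem Hdef Hd).
  - intro e. destruct (chi_cases S op psi d Hidem Hdef Hd e) as [[E N] | [E N]];
      rewrite E; [exact N | rewrite Cnorm_sub_C0; exact N].
Qed.
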